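(* Let $k \ge 2$ be an integer. Then for all but finitely many positive integers $N$, there is a connected graph $G$ with $\mathrm{SW}_k(G)=N$.
   Context: For a connected graph $G$ and a subset $S \subset V(G)$, the Steiner distance $d(S)$ is the smallest number of edges in a connected subgraph of $G$ whose vertex set contains $S$. For an integer $k\ge 2$, the Steiner--Wiener $k$ index of $G$ is $\mathrm{SW}_k(G)=\sum_{S \subset V(G),\ |S|=k} d(S)$. *)

From mathcomp Require Import all_boot.
Set Implicit Arguments. Unset Strict Implicit. Unset Printing Implicit Defensive.

Section Graphs.
Variable T : finType.
Implicit Type e : rel T.

Definition simple_graph e : Prop := symmetric e /\ irreflexive e.

Definition connected_graph e : Prop :=
  0 < #|T| /\ forall x y : T, connect e x y.

Definition edges e : {set {set T}} :=
  [set f : {set T} | [exists x, exists y, (f == [set x; y]) && e x y]].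

Definition edge_rel (F : {set {set T}}) : rel T := fun x y => [set x; y] \in F.

Definition steiner_subgraph e (S : {set T}) (WF : {set T} * {set {set T}}) : bool :=
  let W := WF.1 in let F := WF.2 in
  [&& F \subset edges e,
      [forall f in F, f \subset W],
      S \subset W &
      [forall x in W, forall y in W, connect (edge_rel F) x y]].

(* Steiner distance d(S): least number of edges of a connected subgraph
   whose vertex set contains S (the default #|edges e| is never reached
   when G is connected, since G itself is such a subgraph). *)
Definition steiner_dist e (S : {set T}) : nat :=
  \big[minn/#|edges e|]_(WF | steiner_subgraph e S WF) #|WF.2|.

Definition SW (k : nat) e : nat :=
  \sum_(S : {set T} | #|S| == k) steiner_dist e S.

End Graphs.

From mathcomp Require Import all_boot zify.
Set Implicit Arguments. Unset Strict Implicit. Unset Printing Implicit Defensive.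

(* With a universal vertex u, a k-set S (k < |V|) has Steiner distance k - 1
   if S spans a connected subgraph by itself and k otherwise, a star from u
   being always available.  In the cone over a disjoint union of threshold
   graphs a k-set spans a connected subgraph exactly when it contains the apex
   or lies below a flagged vertex of its own label class; with k = K + 1 and
   L vertices under the apex this gives
     SW_k = L * C(L, K) - sum over flagged m of C(rank m, K),
   rank m being the number of earlier vertices with the label of m.  Put h
   vertices in one class, followed by a fixed number of classes of k vertices:
   reading C(h, k) = sum_{m < h} C(m, K) greedily, and flagging the top
   vertices (each worth 1) of some small classes for the remainder, the
   subtracted weight takes every value in [0, C(h, k)].  Once h is large,
   L * C(L, K) increases by at most C(h + 1, k) + 1 when h does, so these
   intervals cover all large integers. *)

Lemma geq_bigmin_cond (I : finType) (P : pred I) (F : I -> nat) x i :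
  P i -> \big[minn/x]_(j | P j) F j <= F i.
Proof.
move=> Pi; have : i \in index_enum I by rewrite mem_index_enum.
elim: (index_enum I) => // j s IHs; rewrite inE big_cons => /orP [/eqP <-|si].
  by rewrite Pi geq_minl.
by case: (P j); [apply: leq_trans (geq_minr _ _) (IHs si) | apply: IHs].
Qed.

Lemma card_draws_mem (T : finType) (A : {set T}) a j : a \in A ->
  #|[set S : {set T} | [&& #|S| == j.+1, a \in S & S \subset A]]| = 'C(#|A| - 1, j).
Proof.
move=> aA; have -> : #|A| - 1 = #|A :\ a| by rewrite (cardsD1 a A) aA add1n subn1.
rewrite -cards_draws -(card_in_imset (f := fun S => S :\ a)) => [|S1 S2]; last first.
  rewrite !inE => /and3P [_ aS1 _] /and3P [_ aS2 _] eqS12.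
  by rewrite -(setD1K aS1) -(setD1K aS2) eqS12.
apply: eq_card => B; rewrite inE; apply/imsetP/andP => [[S] | [BA /eqP cardB]].
  rewrite inE => /and3P [/eqP cardS aS SA] ->; split; first exact: setSD.
  by rewrite (cardsD1 a S) aS add1n in cardS; case: cardS => ->.
have aB : a \notin B by apply/negP => /(subsetP BA); rewrite !inE eqxx.
exists (a |: B); last by rewrite setU1K.
rewrite inE cardsU1 aB cardB setU11 subUset sub1set aA /=.
by rewrite add1n eqxx (subset_trans BA (subD1set A a)).
Qed.

Lemma sum_bool_card (I : finType) (P Q : pred I) :
  \sum_(i | P i) (Q i : nat) = #|[set i | P i && Q i]|.
Proof.
by rewrite -sum1_card [RHS](eq_bigl (fun i => P i && Q i)) ?big_mkcondr // => i; rewrite inE.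
Qed.

Lemma sum_bool_uniq (I : finType) (P : pred I) :
  {in P &, forall i j, i = j} -> \sum_i (P i : nat) = [exists i, P i].
Proof.
move=> P_uniq; have [[i Pi]|noP] := altP existsP.
  rewrite (bigD1 i) //= Pi big1 // => j ji; apply/eqP; rewrite eqb0.
  by apply: contra ji => Pj; rewrite (P_uniq j i).
rewrite big1 // => i _; apply/eqP; rewrite eqb0.
by apply: contra noP => Pi; apply/existsP; exists i.
Qed.

(** * Steiner distance in a graph with a universal vertex *)

Section ConnectedEdgeSet.
Variables (T : finType) (F : {set {set T}}) (r : T).
Local Notation E := (edge_rel F).

Fixpoint bfs_ball n : {set T} :=
  if n is n'.+1 then bfs_ball n' :|: [set y | [exists x in bfs_ball n', E x y]] else [set r].

Lemma bfs_ball_path p x n :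
  path E x p -> x \in bfs_ball n -> last x p \in bfs_ball (n + size p).
Proof.
elim: p x n => [|y p IHp] x n /=; first by rewrite addn0.
case/andP=> Exy Ep xn; rewrite addnS -addSn; apply: IHp => //=.
by rewrite !inE; apply/orP; right; apply/existsP; exists x; rewrite xn.
Qed.

(* Unreachable vertices get distance 0, so that [bfs_dist] is total. *)
Lemma exists_bfs_dist y : exists n, (y \in bfs_ball n) || ~~ connect E r y.
Proof.
case: (boolP (connect E r y)) => [/connectP [p Ep ->]|]; last by exists 0; rewrite orbT.
by exists (0 + size p); rewrite (bfs_ball_path Ep) // inE.
Qed.

Definition bfs_dist y := ex_minn (exists_bfs_dist y).

Lemma mem_bfs_ball_dist y : connect E r y -> y \in bfs_ball (bfs_dist y).
Proof. by rewrite /bfs_dist; case: ex_minnP => n + _ ry; rewrite ry orbF. Qed.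

Lemma bfs_dist_min y n : y \in bfs_ball n -> bfs_dist y <= n.
Proof. by rewrite /bfs_dist; case: ex_minnP => m _ min_m yn; apply: min_m; rewrite yn. Qed.

Definition bfs_parent y := [pick x | (x \in bfs_ball (bfs_dist y).-1) && E x y].

Definition bfs_parent_edge y : {set T} := if bfs_parent y is Some x then [set x; y] else set0.

Lemma bfs_parentP y : connect E r y -> y != r ->
  exists x, [/\ bfs_parent y = Some x, E x y & bfs_dist x < bfs_dist y].
Proof.
move=> ry yr; have yd := mem_bfs_ball_dist ry.
have d_gt0 : 0 < bfs_dist y.
  by move: yd; case: (bfs_dist y) => //=; rewrite inE (negbTE yr).
rewrite /bfs_parent; case: pickP => [x /andP [xd Exy]|no_parent].
  by exists x; split=> //; have := bfs_dist_min xd; lia.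
move: yd; rewrite -(prednK d_gt0) /= !inE => /orP [/bfs_dist_min|]; first lia.
by case/exists_inP=> x xd Exy; move: (no_parent x); rewrite xd Exy.
Qed.

Lemma bfs_parent_edge_inj (W : {set T}) :
  {in W, forall y, connect E r y} -> {in W :\ r &, injective bfs_parent_edge}.
Proof.
move=> rW y y' /setD1P [yr yW] /setD1P [y'r y'W] eq_pe.
have [x [px _ dx]] := bfs_parentP (rW y yW) yr.
have [x' [px' _ dx']] := bfs_parentP (rW y' y'W) y'r.
have [//|y'y] := eqVneq y y'; move: eq_pe; rewrite /bfs_parent_edge px px' => eq_e.
have : y \in [set x'; y'] by rewrite -eq_e !inE eqxx orbT.
have : y' \in [set x; y] by rewrite eq_e !inE eqxx orbT.
rewrite !inE (negbTE y'y) [y' == y]eq_sym (negbTE y'y) !orbF.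
by move=> /eqP Ey' /eqP Ey; subst; lia.
Qed.

End ConnectedEdgeSet.

(* Breadth-first search from a vertex r maps every other vertex injectively
   to the edge joining it to its parent. *)
Lemma card_connected_le (T : finType) (F : {set {set T}}) (W : {set T}) :
  [forall x in W, forall y in W, connect (edge_rel F) x y] -> #|W| <= #|F| + 1.
Proof.
have [->|[r rW]] := set_0Vmem W; first by rewrite cards0.
move=> /forall_inP /(_ r rW) /forall_inP rW'.
have /subset_leq_card : bfs_parent_edge F r @: (W :\ r) \subset F.
  apply/subsetP=> _ /imsetP [y /setD1P [yr yW] ->].
  by have [x [px Exy _]] := bfs_parentP (rW' y yW) yr; rewrite /bfs_parent_edge px.
rewrite card_in_imset; last exact: bfs_parent_edge_inj.
by rewrite (cardsD1 r W) rW add1n addn1 ltnS.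
Qed.

Section SteinerDistance.
Variables (T : finType) (e : rel T).
Hypotheses (sym_e : symmetric e) (irr_e : irreflexive e).
Implicit Types (S W : {set T}) (F : {set {set T}}).

Lemma mem_edges2 x y : ([set x; y] \in edges e) = e x y.
Proof.
apply/idP/idP=> [|exy]; last first.
  by rewrite inE; apply/existsP; exists x; apply/existsP; exists y; rewrite eqxx exy.
rewrite inE => /existsP [a /existsP [b /andP [/eqP eq_ab eab]]].
have [xy|xy] := eqVneq x y.
  have : [set a; b] \subset [set x] by rewrite -eq_ab xy setUid.
  by rewrite subUset !sub1set !inE => /andP [/eqP ea /eqP eb]; subst; rewrite irr_e in eab.
have : x \in [set a; b] /\ y \in [set a; b] by rewrite -eq_ab !inE !eqxx orbT.
rewrite !inE => -[/orP [] /eqP ex /orP [] /eqP ey]; subst; rewrite ?eqxx // in xy.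
by rewrite sym_e.
Qed.

Lemma edge_rel_edges : edge_rel (edges e) =2 e.
Proof. exact: mem_edges2. Qed.

Lemma steiner_dist_le S WF : steiner_subgraph e S WF -> steiner_dist e S <= #|WF.2|.
Proof. exact: geq_bigmin_cond. Qed.

Lemma steiner_dist_ge S b :
  (forall WF, steiner_subgraph e S WF -> b <= #|WF.2|) -> b <= #|edges e| ->
  b <= steiner_dist e S.
Proof.
move=> le_b le_b_edges; apply: (big_ind (leq b)) => // m n bm bn.
by rewrite leq_min bm.
Qed.

Lemma steiner_dist_star S W c : c \in W -> S \subset W ->
  {in W, forall x, x != c -> e c x} -> steiner_dist e S <= #|W| - 1.
Proof.
move=> cW sSW adj_c.
pose F := [set [set c; x] | x in W :\ c].
have Fc x : x \in W -> connect (edge_rel F) c x /\ connect (edge_rel F) x c.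
  move=> xW; have [->|xc] := eqVneq x c; first by split; apply: connect0.
  have cxF : [set c; x] \in F by apply: imset_f; rewrite !inE xc.
  by split; apply: connect1; rewrite /edge_rel // setUC.
have /steiner_dist_le : steiner_subgraph e S (W, F).
  apply/and4P; split=> //=.
  - apply/subsetP=> _ /imsetP [x /setD1P [xc xW] ->].
    by rewrite mem_edges2 adj_c.
  - apply/forall_inP=> _ /imsetP [x /setD1P [_ xW] ->].
    by rewrite subUset !sub1set cW.
  - apply/forall_inP=> x xW; apply/forall_inP=> y yW.
    exact: connect_trans (Fc x xW).2 (Fc y yW).1.
move/leq_trans; apply; rewrite (cardsD1 c W) cW add1n subSS subn0.
exact: leq_imset_card.
Qed.

Hypothesis conn_e : forall x y, connect e x y.

Lemma card_le_edges : #|T| <= #|edges e| + 1.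
Proof.
rewrite -cardsT; apply: card_connected_le.
by apply/forall_inP=> x _; apply/forall_inP=> y _; rewrite (eq_connect edge_rel_edges).
Qed.

Lemma steiner_dist_lb S : #|S| - 1 <= steiner_dist e S.
Proof.
apply: steiner_dist_ge => [[W F] /and4P [_ _ /= /subset_leq_card sSW]|].
  by move/card_connected_le; rewrite leq_subLR addnC; apply: leq_trans.
by rewrite leq_subLR addnC; apply: leq_trans (max_card _) card_le_edges.
Qed.

Definition has_center S :=
  [exists c in S, [forall x in S, (x != c) ==> e c x]].

Lemma steiner_dist_center S : has_center S -> steiner_dist e S = #|S| - 1.
Proof.
case/exists_inP=> c cS /forall_inP adj_c; apply/eqP.
rewrite eqn_leq steiner_dist_lb andbT; apply: steiner_dist_star cS (subxx S) _.
by move=> x xS xc; have := adj_c x xS; rewrite xc.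
Qed.

Variable u : T.
Hypothesis u_universal : forall x, x != u -> e u x.

(* Without a connected subgraph on S itself, any connected subgraph through S
   has an extra vertex; the star from u realises that bound. *)
Lemma steiner_dist_disconnected S : #|S| < #|T| ->
  (forall F, ~~ steiner_subgraph e S (S, F)) -> steiner_dist e S = #|S|.
Proof.
move=> S_small S_disconn; apply/eqP; rewrite eqn_leq; apply/andP; split.
  have /steiner_dist_star : u \in u |: S by rewrite setU11.
  move=> /(_ S (subsetUr _ _) (fun x _ => u_universal (x:=x))) /leq_trans; apply.
  by rewrite cardsU1; case: (u \in S) => /=; lia.
apply: steiner_dist_ge; last by have := card_le_edges; lia.
move=> [W F] WF; have /and4P [_ _ /= sSW /card_connected_le WF_tree] := WF.
have [eWS|WS] := eqVneq W S; first by rewrite eWS (negbTE (S_disconn F)) in WF.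
have /proper_card : S \proper W by rewrite properEneq eq_sym WS.
by move/leq_trans/(_ WF_tree); rewrite addn1 ltnS.
Qed.

Lemma SW_add_centered k : 0 < k < #|T| ->
  (forall S, #|S| = k -> forall F, steiner_subgraph e S (S, F) -> has_center S) ->
  SW k e + #|[set S : {set T} | (#|S| == k) && has_center S]| = k * 'C(#|T|, k).
Proof.
move=> /andP [k_gt0 k_small] connected_centered.
rewrite -sum_bool_card -big_split /= -card_draws -sum1_card big_distrr /=.
apply: eq_big => [S|S /eqP cardS]; first by rewrite inE.
have [cS|ncS] := boolP (has_center S).
  by rewrite steiner_dist_center // cardS muln1 addn1 subn1 prednK.
rewrite addn0 muln1 -cardS steiner_dist_disconnected ?cardS // => F.
exact: contraNN (connected_centered S cardS F) ncS.
Qed.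

End SteinerDistance.

(** * The cone over threshold graphs *)

Lemma max_ord_in n (S : {set 'I_n}) x :
  x \in S -> exists2 m, m \in S & {in S, forall y : 'I_n, y <= m}.
Proof. by move=> xS; case: (arg_maxnP val xS) => m mS max_m; exists m. Qed.

Section ConeGraph.
Variables (L : nat) (lab : nat -> nat) (fl : nat -> bool).
Local Notation T := 'I_L.+1.
Local Notation apex := (@ord_max L).
Implicit Types (x y m : T) (S : {set T}).

(* The vertices below [L] with a common label form a threshold graph, in which
   a flagged vertex is joined to all earlier ones; the apex [L] is joined to
   every vertex. *)
Definition cone_graph : rel T := fun x y =>
  (x != y) && [|| x == apex, y == apex | (lab x == lab y) && fl (maxn x y)].

Lemma cone_graph_sym : symmetric cone_graph.
Proof. by move=> x y; rewrite /cone_graph eq_sym maxnC [lab y == _]eq_sym orbCA. Qed.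

Lemma cone_graph_irr : irreflexive cone_graph.
Proof. by move=> x; rewrite /cone_graph eqxx. Qed.

Lemma cone_graph_apex x : x != apex -> cone_graph apex x.
Proof. by rewrite /cone_graph eq_sym => ->; rewrite eqxx. Qed.

Lemma cone_graph_connect x y : connect cone_graph x y.
Proof.
have apex_connect z : connect cone_graph apex z.
  by have [->|za] := eqVneq z apex; [apply: connect0 | apply/connect1/cone_graph_apex].
apply: connect_trans (apex_connect y).
by rewrite (sym_connect_sym cone_graph_sym) apex_connect.
Qed.

Lemma neq_apex x : (x != apex) = (x < L).
Proof. by rewrite -(inj_eq val_inj) /= ltn_neqAle -ltnS ltn_ord andbT. Qed.

Lemma cone_graphE x y : x != apex -> y != apex ->
  cone_graph x y = [&& x != y, lab x == lab y & fl (maxn x y)].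
Proof. by move=> /negbTE xa /negbTE ya; rewrite /cone_graph xa ya. Qed.

Definition down m : {set T} := [set j : T | (lab j == lab m) && (j <= m)].

Lemma down_center S m : m != apex -> fl m -> m \in S -> S \subset down m ->
  has_center cone_graph S.
Proof.
move=> ma flm mS /subsetP S_down; apply/exists_inP; exists m => //.
apply/forall_inP=> x xS; apply/implyP=> xm.
have := S_down x xS; rewrite inE => /andP [/eqP lab_x le_xm].
have xa : x != apex by rewrite neq_apex (leq_ltn_trans le_xm) // -neq_apex.
by rewrite cone_graphE // eq_sym xm lab_x eqxx (maxn_idPl le_xm).
Qed.

Lemma max_flagged S m y : apex \notin S -> m \in S -> y \in S ->
  {in S, forall x, x <= m} -> cone_graph m y -> fl m.
Proof.
move=> aS mS yS max_m; have na := memPn aS.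
by rewrite cone_graphE ?na // (maxn_idPl (max_m y yS)) => /and3P [].
Qed.

Lemma center_down S : 1 < #|S| -> apex \notin S -> has_center cone_graph S ->
  exists2 m : T, fl m && (m \in S) & S \subset down m.
Proof.
move=> S2 aS /exists_inP [c cS /forall_inP adj_c].
have adj x : x \in S -> x != c -> cone_graph c x by move=> xS; have := adj_c x xS => /implyP.
have na := memPn aS.
have lab_c x : x \in S -> lab x = lab c.
  move=> xS; have [-> //|xc] := eqVneq x c.
  by move: (adj x xS xc); rewrite cone_graphE ?na // => /and3P [_ /eqP].
have [m mS max_m] := max_ord_in cS.
have [y yS my] : exists2 y, y \in S & cone_graph m y.
  have [mc|mc] := eqVneq m c; last by exists c; rewrite // cone_graph_sym adj.
  have /card_gt0P [x /setD1P [xm xS]] : 0 < #|S :\ m| by rewrite (cardsD1 m S) mS in S2.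
  by exists x; rewrite // mc adj // -mc.
exists m; first by rewrite (max_flagged aS mS yS max_m my) mS.
by apply/subsetP=> x xS; rewrite inE lab_c // (lab_c m mS) eqxx max_m.
Qed.

Lemma connected_center S F : 1 < #|S| ->
  steiner_subgraph cone_graph S (S, F) -> has_center cone_graph S.
Proof.
move=> S2; have [aS _|aS] := boolP (apex \in S).
  apply/exists_inP; exists apex => //; apply/forall_inP=> x _.
  by apply/implyP; apply: cone_graph_apex.
case/and4P=> /subsetP F_edges /forall_inP F_S _ /forall_inP S_conn.
have na := memPn aS.
have edgeF x y : edge_rel F x y -> [/\ x \in S, y \in S & cone_graph x y].
  move=> Fxy; have /subsetP xyS := F_S _ Fxy.
  rewrite -(mem_edges2 cone_graph_sym cone_graph_irr) F_edges //.
  by rewrite !xyS ?inE ?eqxx ?orbT.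
have /card_gt0P [x0 x0S] : 0 < #|S| by apply: ltnW.
have [m mS max_m] := max_ord_in x0S.
have conn_m x : x \in S -> connect (edge_rel F) m x by have /forall_inP := S_conn m mS; apply.
apply: (down_center (na m mS) _ mS).
  have /card_gt0P [x /setD1P [xm xS]] : 0 < #|S :\ m| by rewrite (cardsD1 m S) mS in S2.
  case/connectP: (conn_m x xS) => [[|z p]] /=; first by move=> _ xm'; rewrite xm' eqxx in xm.
  by case/andP=> /edgeF [_ zS mz] _ _; apply: max_flagged aS mS zS max_m mz.
apply/subsetP=> x xS; rewrite inE max_m // andbT.
have lab_closed : closed (edge_rel F) [pred z : T | lab z == lab m].
  move=> y z /edgeF [yS zS]; rewrite cone_graphE ?na // => /and3P [_ /eqP lab_yz _].
  by rewrite !inE lab_yz.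
by have := closed_connect lab_closed (conn_m x xS); rewrite !inE eqxx => <-.
Qed.

Definition label_rank (m : nat) := \sum_(0 <= j < m) (lab j == lab m).

Lemma card_down (m : T) : #|down m| = (label_rank m).+1.
Proof.
rewrite -sum1_card big_mkcond /=.
rewrite (eq_bigr (fun j : T => ((lab j == lab m) && (j <= m) : nat))) => [|j _]; last first.
  by rewrite inE; case: (_ && _).
rewrite -(big_mkord xpredT (fun j => ((lab j == lab m) && (j <= m) : nat))).
rewrite (big_cat_nat _ (n := m.+1)) //= [X in _ + X]big1_seq => [|j /andP [_]]; last first.
  by rewrite mem_index_iota => /andP [lt_mj _]; rewrite leqNgt lt_mj andbF.
rewrite addn0 big_nat_recr //= eqxx leqnn addn1; congr _.+1.
by apply: eq_big_nat => j /andP [_ lt_jm]; rewrite ltnW ?andbT.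
Qed.

Lemma center_cone_sum (S : {set T}) : 1 < #|S| ->
  has_center cone_graph S =
  (apex \in S) + \sum_m [&& m != apex, fl m, m \in S & S \subset down m] :> nat.
Proof.
move=> S2; have [aS|aS] := boolP (apex \in S).
  rewrite big1 => [|m _]; last first.
    apply/eqP; rewrite eqb0; apply/and4P=> -[ma _ _ /subsetP/(_ _ aS)].
    by rewrite inE leqNgt -neq_apex ma andbF.
  suff -> : has_center cone_graph S by [].
  apply/exists_inP; exists apex => //; apply/forall_inP=> x _.
  by apply/implyP; apply: cone_graph_apex.
rewrite add0n sum_bool_uniq => [|m m' /and4P [_ _ mS /subsetP Sm]]; last first.
  case/and4P=> _ _ m'S /subsetP Sm'; apply: val_inj; apply/eqP.
  move: (Sm m' m'S) (Sm' m mS); rewrite !inE => /andP [_ le_m'm] /andP [_ le_mm'].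
  by rewrite eqn_leq le_m'm le_mm'.
apply: (congr1 nat_of_bool); apply/idP/existsP => [/(center_down S2 aS) [m /andP [flm mS] Sm]|].
  by exists m; rewrite flm mS Sm !andbT; apply: contraNneq aS => <-.
by case=> m /and4P [ma flm mS Sm]; apply: down_center ma flm mS Sm.
Qed.

Lemma card_center_cone K : 0 < K ->
  #|[set S : {set T} | (#|S| == K.+1) && has_center cone_graph S]| =
  'C(L, K) + \sum_(i < L) fl i * 'C(label_rank i, K).
Proof.
move=> K_gt0; rewrite -sum_bool_card.
rewrite (eq_bigr (fun S : {set T} => (apex \in S) +
  \sum_(m : T) [&& m != apex, fl m, m \in S & S \subset down m])) => [|S /eqP cardS]; last first.
  by rewrite center_cone_sum // cardS ltnS.
rewrite big_split /= sum_bool_card; congr (_ + _).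
  have := card_draws_mem K (in_setT apex); rewrite cardsT card_ord subn1 /= => <-.
  by apply: eq_card => S; rewrite !inE subsetT andbT.
rewrite exchange_big big_ord_recr /= eqxx big1_eq addn0.
apply: eq_bigr => i _; set w := widen_ord (leqnSn L) i.
have -> : w != apex by rewrite neq_apex /= ltn_ord.
rewrite sum_bool_card -[fl i]/(fl w); case: (fl w) => /=; last first.
  by apply/eqP; rewrite cards_eq0; apply/eqP/setP=> S; rewrite !inE andbF.
have ww : w \in down w by rewrite inE !eqxx leqnn.
have := card_draws_mem K ww; rewrite card_down subn1 mul1n /= => <-.
by apply: eq_card => S; rewrite !inE.
Qed.

End ConeGraph.

Lemma cone_graph_simple L lab fl : simple_graph (@cone_graph L lab fl).
Proof. by split; [apply: cone_graph_sym | apply: cone_graph_irr]. Qed.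

Lemma cone_graph_connected L lab fl : connected_graph (@cone_graph L lab fl).
Proof. by split; [rewrite card_ord | apply: cone_graph_connect]. Qed.

Lemma SW_cone_graph L lab fl K : 0 < K < L ->
  SW K.+1 (@cone_graph L lab fl) + \sum_(m < L) fl m * 'C(label_rank lab m, K) =
  L * 'C(L, K).
Proof.
case/andP=> K_gt0 lt_KL; have k_range : 0 < K.+1 < #|'I_L.+1| by rewrite card_ord ltnS.
have connected_centered (S : {set 'I_L.+1}) : #|S| = K.+1 -> forall F,
    steiner_subgraph (cone_graph lab fl) S (S, F) -> has_center (cone_graph lab fl) S.
  by move=> cardS F; apply: connected_center; rewrite cardS ltnS.
have := SW_add_centered (cone_graph_sym lab fl) (cone_graph_irr lab fl)
  (cone_graph_connect lab fl) (@cone_graph_apex L lab fl) k_range connected_centered.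
by rewrite card_center_cone // card_ord -(mul_bin_diag L.+1) mulSn /=; lia.
Qed.

(** * Binomial arithmetic *)

Lemma leq_bin_below_half m j : j.*2 < m -> 'C(m, j) <= 'C(m, j.+1).
Proof.
move=> lt_jm; rewrite -(leq_pmul2l (ltn0Sn j)) mul_bin_left.
by rewrite leq_mul2r; apply/orP; right; lia.
Qed.

Lemma leq_bin_shift K h c : K.*2 <= h -> 'C(h + c, K) <= 2 ^ c * 'C(h, K).
Proof.
move=> le_2K_h; elim: c => [|c IHc]; first by rewrite addn0 mul1n.
rewrite addnS expnS -mulnA (leq_trans _ (leq_mul (leqnn 2) IHc)) //.
case: K {IHc} le_2K_h => [|K] le_2K_h; first by rewrite !bin0.
rewrite binS mul2n -addnn leq_add2l; apply: leq_bin_below_half; lia.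
Qed.

Lemma bin_growth K c :
  exists H, forall h, H <= h -> K.+1 * 'C(h + c, K) <= 'C(h.+1, K.+1).
Proof.
exists (maxn K.*2 (K.+1 * K.+1 * 2 ^ c)) => h; rewrite geq_max => /andP [le_2K_h le_h].
rewrite -(leq_pmul2l (ltn0Sn K)) -(mul_bin_diag h.+1) /=.
apply: leq_trans (_ : K.+1 * K.+1 * 2 ^ c * 'C(h, K) <= _); last by rewrite leq_mul2r ltnW ?orbT.
by rewrite -!mulnA !leq_mul2l leq_bin_shift ?orbT.
Qed.

(* Greedy descent along C(m + 1, K + 1) = C(m, K + 1) + C(m, K); it needs
   C(m, K) <= C(m, K + 1), i.e. m > 2K, and stops at m = 2K + 1. *)
Lemma greedy_binomial K n t : t <= 'C(K.*2.+1 + n, K.+1) ->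
  exists (D : nat -> bool) rho, rho <= 'C(K.*2.+1, K.+1) /\
    t = \sum_(0 <= m < K.*2.+1 + n) D m * 'C(m, K) + rho.
Proof.
elim: n t => [|n IHn] t le_t.
  exists (fun _ => false), t; rewrite addn0 in le_t; split=> //.
  by rewrite big1 // => m _; rewrite mul0n.
rewrite addnS binS in le_t; set h := K.*2.+1 + n in le_t *.
have le_bin : 'C(h, K) <= 'C(h, K.+1) by apply: leq_bin_below_half; lia.
pose b := 'C(h, K.+1) < t.
have [le_bt le_tb] : b * 'C(h, K) <= t /\ t - b * 'C(h, K) <= 'C(h, K.+1).
  by rewrite /b; case: ltnP => /=; lia.
have [D [rho [le_rho Et]]] := IHn _ le_tb.
exists (fun m => if m == h then b else D m), rho; split=> //.
rewrite addnS -/h big_nat_recr //= eqxx.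
rewrite (eq_big_nat _ _ (F2 := fun m => D m * 'C(m, K))) => [|m /andP [_ lt_mh]]; last first.
  by rewrite ltn_eqF.
by rewrite -/h in Et; lia.
Qed.

(** * Realising all large values *)

Lemma label_rank_interval (lab : nat -> nat) m a : a <= m ->
  (forall j, j < m -> (lab j == lab m) = (a <= j)) -> label_rank lab m = m - a.
Proof.
move=> le_am same_lab; rewrite /label_rank.
rewrite (eq_big_nat _ _ (F2 := fun j => a <= j : nat)) => [|j /andP [_ /same_lab ->]] //.
rewrite (big_cat_nat _ (n := a)) //= big_nat_cond big1 => [|j /andP [/andP [_ lt_ja] _]].
  rewrite add0n (eq_big_nat _ _ (F2 := fun=> 1)) => [|j /andP [-> _]] //.
  by rewrite sum_nat_const_nat muln1.
by rewrite leqNgt lt_ja.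
Qed.

Section BlockLabelling.
Variables (K h rho : nat) (D : nat -> bool).
Local Notation k := K.+1.

(* Vertices [0, h) share label 0 and carry the flags [D]; above them come
   blocks of [k] vertices with labels 1, 2, ..., and the top vertex of block
   [b] is flagged iff [b < rho]. *)
Definition block_label m := if m < h then 0 else (m - h) %/ k + 1.
Definition block_flag m := if m < h then D m else ((m - h) %% k == K) && ((m - h) %/ k < rho).

Lemma label_rank_low m : m < h -> label_rank block_label m = m.
Proof.
move=> lt_mh; rewrite (@label_rank_interval _ m 0) ?subn0 // => j lt_jm.
by rewrite /block_label lt_mh (ltn_trans lt_jm lt_mh).
Qed.

Lemma block_label_pos b i : i < k -> block_label (h + b * k + i) = b.+1.
Proof.
move=> lt_ik; rewrite /block_label ifN; last by rewrite -leqNgt -addnA leq_addr.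
by rewrite -addnA addKn divnMDl // divn_small // addn0 addn1.
Qed.

Lemma block_flag_pos b i : i < k -> block_flag (h + b * k + i) = (i == K) && (b < rho).
Proof.
move=> lt_ik; rewrite /block_flag ifN; last by rewrite -leqNgt -addnA leq_addr.
by rewrite -addnA addKn divnMDl // divn_small // addn0 modnMDl modn_small.
Qed.

Lemma label_rank_block b i : i < k -> label_rank block_label (h + b * k + i) = i.
Proof.
move=> lt_ik; rewrite (@label_rank_interval _ _ (h + b * k)) ?leq_addr ?addKn //.
move=> j lt_j; rewrite block_label_pos // /block_label.
case: ltnP => [lt_jh|le_hj]; first by apply/esym/negbTE; rewrite -ltnNge; lia.
rewrite addn1 eqSS eqn_leq leq_divRL // -ltnS ltn_divLR //.
apply/andP/idP => [[]|le_j]; first lia.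
split; lia.
Qed.

Lemma block_weight_step b :
  \sum_(h + b * k <= m < h + b.+1 * k) block_flag m * 'C(label_rank block_label m, K) =
  (b < rho).
Proof.
rewrite -[h + b * k]add0n big_addn.
have -> : h + b.+1 * k - (h + b * k) = K.+1 by rewrite mulSn; lia.
rewrite big_nat_recr //= big_nat_cond big1 => [|i /andP [/andP [_ lt_iK] _]]; last first.
  by rewrite addnC block_flag_pos ?(ltn_eqF lt_iK) // ltnW.
by rewrite add0n addnC block_flag_pos // label_rank_block // eqxx binn muln1.
Qed.

Lemma block_weight R : rho <= R ->
  \sum_(m < h + R * k) block_flag m * 'C(label_rank block_label m, K) =
  \sum_(0 <= m < h) D m * 'C(m, K) + rho.
Proof.
move=> le_rho.
rewrite -(big_mkord xpredT (fun m => block_flag m * 'C(label_rank block_label m, K))).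
rewrite (big_cat_nat _ (n := h)) ?leq_addr //=.
congr (_ + _).
  by apply: eq_big_nat => m /andP [_ lt_mh]; rewrite label_rank_low // /block_flag lt_mh.
suff -> : forall b, \sum_(h <= m < h + b * k) block_flag m * 'C(label_rank block_label m, K) =
  minn b rho by apply/minn_idPr.
elim=> [|b IHb]; first by rewrite mul0n addn0 big_geq ?min0n.
rewrite (big_cat_nat _ (n := h + b * k)) ?leq_addr ?leq_add2l ?leq_mul2r ?leqnSn ?orbT //=.
rewrite IHb block_weight_step; case: ltnP => /= [lt_b|le_b]; lia.
Qed.

End BlockLabelling.

Lemma consecutive_intervals_cover (top w : nat -> nat) H :
  (forall h, h <= top h) ->
  (forall h, H <= h -> top h.+1 <= (top h).+1 + w h.+1) ->
  forall N, top H < N -> exists2 h, H <= h & exists2 t, t <= w h & N + t = top h.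
Proof.
move=> top_ge step N lt_N.
have ex_h : exists h, (H <= h) && (N <= top h).
  by exists (maxn N H); rewrite leq_maxr (leq_trans (leq_maxl N H)).
case: (ex_minnP ex_h) => h /andP [le_Hh le_N] min_h.
have lt_Hh : H < h.
  by rewrite ltn_neqAle le_Hh andbT; apply: contraTneq lt_N => ->; rewrite -leqNgt.
case: h le_Hh lt_Hh le_N min_h => // h _; rewrite ltnS => le_Hh le_N min_h.
have lt_top : top h < N.
  by rewrite ltnNge; apply/negP=> le_N'; have := min_h h; rewrite le_Hh le_N' ltnn => /(_ isT).
exists h.+1; first exact: ltnW.
by exists (top h.+1 - N); [have := step h le_Hh; lia | rewrite subnKC].
Qed.

(* Room for [h] vertices in one class and C(2K + 1, K + 1) classes of size
   K + 1; [SW_top K h] is SW_(K+1) of the cone over it when nothing is flagged. *)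
Definition cone_base K h := h + 'C(K.*2.+1, K.+1) * K.+1.

Definition SW_top K h := cone_base K h * 'C(cone_base K h, K).

Lemma SW_top_ge K h : h <= SW_top K h.
Proof.
have R_gt0 : 0 < 'C(K.*2.+1, K.+1) by rewrite bin_gt0; lia.
apply: leq_trans (leq_addr _ h) (leq_pmulr _ _); rewrite bin_gt0 /cone_base; nia.
Qed.

Lemma SW_top_step K : exists2 H, K.*2.+1 <= H &
  forall h, H <= h -> SW_top K h.+1 <= (SW_top K h).+1 + 'C(h.+1, K.+1).
Proof.
have [H grow] := bin_growth K ('C(K.*2.+1, K.+1) * K.+1).+1.
exists (maxn H K.*2.+1) => [|h]; first exact: leq_maxr.
rewrite geq_max => /andP [/grow + _]; rewrite /SW_top /cone_base addnS addSn.
set L := h + _; move=> grow_h.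
have diagL := mul_bin_diag L.+1 K; have diagL1 := mul_bin_diag L.+2 K.
have pascal := binS L.+1 K; have mono := @leq_bin2l L L.+1 K (leqnSn L).
rewrite /= in diagL diagL1; nia.
Qed.

Lemma SW_cone_realize K h t : 0 < K -> K.*2.+1 <= h -> t <= 'C(h, K.+1) ->
  exists lab fl, SW K.+1 (@cone_graph (cone_base K h) lab fl) + t = SW_top K h.
Proof.
move=> K_gt0 le_h le_t.
have := @greedy_binomial K (h - K.*2.+1) t; rewrite subnKC // => /(_ le_t).
case=> D [rho [le_rho ->]]; exists (block_label K h), (block_flag K h rho D).
rewrite -(@block_weight K h rho D _ le_rho) SW_cone_graph // K_gt0 /cone_base.
have R_gt0 : 0 < 'C(K.*2.+1, K.+1) by rewrite bin_gt0; lia.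
nia.
Qed.

Theorem theorem1p1 (k : nat) (hk : 2 <= k) :
  exists M : nat, forall N : nat, M < N ->
    exists (n : nat) (e : rel 'I_n),
      simple_graph e /\ connected_graph e /\ SW k e = N.
Proof.
case: k hk => [|K] //; rewrite ltnS => K_gt0.
have [H le_H step] := SW_top_step K.
exists (SW_top K H) => N lt_N.
have [h le_Hh [t le_t Nt]] :=
  consecutive_intervals_cover (w := binomial^~ K.+1) (SW_top_ge K) step lt_N.
have [lab [fl SW_t]] := SW_cone_realize K_gt0 (leq_trans le_H le_Hh) le_t.
exists (cone_base K h).+1, (cone_graph lab fl).
split; [exact: cone_graph_simple | split; [exact: cone_graph_connected | lia]].
Qed.
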